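(* Let $\mathbb{K}$ be an algebraically closed field of characteristic zero, $\mathcal{C}\subset\mathbb{K}^2$ an affine irreducible plane curve defined by an irreducible polynomial $f(y_1,y_2)$, $A=(a,b)\in\mathbb{K}^2$ and $d\in\mathbb{K}\setminus\{0\}$. Let $\mathfrak{B}(\mathcal{C},A,d)\subset\mathbb{K}^2\times\mathbb{K}^2\times\mathbb{K}$ be the set of $(\bar x,\bar y,w)$, $\bar x=(x_1,x_2)$, $\bar y=(y_1,y_2)$, satisfying $f(y_1,y_2)=0$, $(x_1-y_1)^2+(x_2-y_2)^2=d^2$, $(y_2-b)(x_1-y_1)-(y_1-a)(x_2-y_2)=0$, $w\big((y_1-a)^2+(y_2-b)^2\big)=1$, and let $\pi_1(\bar x,\bar y,w)=\bar x$, $\pi_2(\bar x,\bar y,w)=\bar y$ be the projections restricted to $\mathfrak{B}(\mathcal{C},A,d)$. Let $\mathcal{C}_0=\{(p_1,p_2)\in\mathcal{C}:(p_1-a)^2+(p_2-b)^2\neq0\}$. Then: (1) If $\mathcal{C}$ is not the circle $(y_1-a)^2+(y_2-b)^2=d^2$, then (1.1) for every $\bar x\in\pi_1(\mathfrak{B}(\mathcal{C},A,d))\setminus\{A\}$ one has $\mathrm{Card}(\pi_1^{-1}(\bar x))\le 2$, and (1.2) if $A\in\pi_1(\mathfrak{B}(\mathcal{C},A,d))$ then $\mathrm{Card}(\pi_1^{-1}(A))\le 2\deg(\mathcal{C})$. (2) For every $\bar y\in\mathcal{C}_0$, $\mathrm{Card}(\pi_2^{-1}(\bar y))=2$.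
   Context: $\deg(\mathcal{C})$ is the degree of $f$. *)

From HB Require Import structures.
From mathcomp Require Import all_boot all_order all_algebra.
From mathcomp Require Import mpoly.
Set Implicit Arguments. Unset Strict Implicit. Unset Printing Implicit Defensive.
Import Order.TTheory GRing.Theory Num.Theory.
Local Open Scope ring_scope.

(* point of K^2 as a valuation of the two variables y1 = 'X_0, y2 = 'X_1 *)
Definition pt2 (K : ringType) (p : K * K) : 'I_2 -> K :=
  fun i => if val i == 0%N then p.1 else p.2.

Definition ev2 (K : comRingType) (f : {mpoly K[2]}) (p : K * K) : K :=
  f.@[pt2 p].

(* irreducible polynomial of K[y1,y2]: non-constant, and every factorisation
   has a constant (nonzero, msize = 1) factor *)
Definition irreducible_mpoly (K : idomainType) (f : {mpoly K[2]}) : Prop :=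
  (1 < msize f)%N /\
  forall g h : {mpoly K[2]}, f = g * h -> msize g = 1%N \/ msize h = 1%N.

(* total degree of f (= deg of the curve) *)
Definition tdeg (K : ringType) (f : {mpoly K[2]}) : nat := (msize f).-1.

Definition curve (K : comRingType) (f : {mpoly K[2]}) (p : K * K) : Prop :=
  ev2 f p = 0.

Definition Bset (K : comRingType) (f : {mpoly K[2]}) (A : K * K) (d : K)
  (z : (K * K) * (K * K) * K) : Prop :=
  let: (x, y, w) := z in
  [/\ ev2 f y = 0,
      (x.1 - y.1) ^+ 2 + (x.2 - y.2) ^+ 2 = d ^+ 2,
      (y.2 - A.2) * (x.1 - y.1) - (y.1 - A.1) * (x.2 - y.2) = 0
    & w * ((y.1 - A.1) ^+ 2 + (y.2 - A.2) ^+ 2) = 1].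

Definition pi1 (K : Type) (z : (K * K) * (K * K) * K) : K * K := z.1.1.
Definition pi2 (K : Type) (z : (K * K) * (K * K) * K) : K * K := z.1.2.

(* Card(P) <= n for a (possibly infinite) set P *)
Definition card_le (T : eqType) (P : T -> Prop) (n : nat) : Prop :=
  forall s : seq T, uniq s -> (forall z, z \in s -> P z) -> (size s <= n)%N.

Definition card_eq (T : eqType) (P : T -> Prop) (n : nat) : Prop :=
  exists s : seq T, [/\ uniq s, size s = n & forall z, P z <-> z \in s].

From HB Require Import structures.
From mathcomp Require Import all_boot all_order all_algebra.
From mathcomp Require Import mpoly.
From mathcomp Require Import ring zify.
Set Implicit Arguments. Unset Strict Implicit. Unset Printing Implicit Defensive.
Import Order.TTheory GRing.Theory Num.Theory.
Local Open Scope ring_scope.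

(* Part (2): if x lies over y, the third equation makes x - y parallel to
   y - A; as |y - A|^2 = s^2 is nonzero, x = y +- (d/s) (y - A), and w is
   forced to be 1/s^2.  Part (1.1): for x != A the same equation puts y on
   the line A + mu (x - A), and |x - y| = d leaves only mu = 1 +- d/|x - A|.
   Part (1.2): the fibre over A consists of the points of C on the circle
   |y - A| = d.  With i^2 = -1, u = (y1 - a) + i (y2 - b) is a rational
   coordinate on that circle, and u^(deg f) f(y(u)) is a polynomial of
   degree at most 2 deg f vanishing at the coordinates of the fibre.  If it
   is the zero polynomial, f vanishes on the whole circle, so the circle's
   equation divides f and irreducibility makes C the circle itself. *)

Section PlaneAlgebra.
Variable K : fieldType.

Lemma parallel_scale (v1 v2 u1 u2 : K) :
  v1 ^+ 2 + v2 ^+ 2 != 0 -> v2 * u1 - v1 * u2 = 0 ->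
  exists c, u1 = c * v1 /\ u2 = c * v2.
Proof.
move=> N0 cross0; exists ((v1 * u1 + v2 * u2) / (v1 ^+ 2 + v2 ^+ 2)).
split; apply: (mulfI N0); rewrite mulrA mulrCA divff // mulr1.
- transitivity (v1 * (v1 * u1 + v2 * u2) + v2 * (v2 * u1 - v1 * u2)); first ring.
  by rewrite cross0; ring.
- transitivity (v2 * (v1 * u1 + v2 * u2) - v1 * (v2 * u1 - v1 * u2)); first ring.
  by rewrite cross0; ring.
Qed.

Lemma sqr_mul_eq_sqr (t s d : K) : s != 0 -> t ^+ 2 * s ^+ 2 = d ^+ 2 ->
  t = d / s \/ t = - (d / s).
Proof.
move=> s0; rewrite -exprMn => /eqP; rewrite eqf_sqr.
by case/orP=> /eqP h; [left | right]; rewrite -?mulNr -h mulfK.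
Qed.

Lemma parallel_of_sqnorm (v1 v2 u1 u2 s d : K) :
  s ^+ 2 = v1 ^+ 2 + v2 ^+ 2 -> s != 0 ->
  u1 ^+ 2 + u2 ^+ 2 = d ^+ 2 -> v2 * u1 - v1 * u2 = 0 ->
  exists2 t, t = d / s \/ t = - (d / s) & u1 = t * v1 /\ u2 = t * v2.
Proof.
move=> hs s0 hu cross0.
have N0 : v1 ^+ 2 + v2 ^+ 2 != 0 by rewrite -hs expf_neq0.
have [t [e1 e2]] := parallel_scale N0 cross0.
exists t => //; apply: sqr_mul_eq_sqr s0 _.
by rewrite hs -hu e1 e2; ring.
Qed.

Lemma on_line_through_center (x A y : K * K) (se d : K) : d != 0 -> x != A ->
  se ^+ 2 = (x.1 - A.1) ^+ 2 + (x.2 - A.2) ^+ 2 ->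
  (y.1 - A.1) ^+ 2 + (y.2 - A.2) ^+ 2 != 0 ->
  (x.1 - y.1) ^+ 2 + (x.2 - y.2) ^+ 2 = d ^+ 2 ->
  (y.2 - A.2) * (x.1 - y.1) - (y.1 - A.1) * (x.2 - y.2) = 0 ->
  exists2 mu, mu = 1 - d / se \/ mu = 1 + d / se &
    y = (A.1 + mu * (x.1 - A.1), A.2 + mu * (x.2 - A.2)).
Proof.
case: x A y => [x1 x2] [a1 a2] [y1 y2] /= d0 xA hse N0 hu cross0.
have cross0' : (y2 - a2) * (x1 - a1) - (y1 - a1) * (x2 - a2) = 0.
  by rewrite -cross0; ring.
have [c [e1 e2]] := parallel_scale N0 cross0'.
have c0 : c != 0.
  apply: contraNneq xA => c0; move: e1 e2; rewrite c0 !mul0r.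
  by move=> /eqP; rewrite subr_eq0 => /eqP -> /eqP; rewrite subr_eq0 => /eqP ->.
have v1E : y1 - a1 = c^-1 * (x1 - a1) by rewrite e1 mulKf.
have v2E : y2 - a2 = c^-1 * (x2 - a2) by rewrite e2 mulKf.
have hmu : (1 - c^-1) ^+ 2 * se ^+ 2 = d ^+ 2.
  rewrite hse -hu.
  have -> : x1 - y1 = (x1 - a1) - (y1 - a1) by ring.
  have -> : x2 - y2 = (x2 - a2) - (y2 - a2) by ring.
  by rewrite v1E v2E; ring.
have se0 : se != 0.
  by apply: contra_eq_neq hmu => ->; rewrite expr0n mulr0 eq_sym expf_neq0.
exists c^-1.
  have -> : c^-1 = 1 - (1 - c^-1) by ring.
  by case: (sqr_mul_eq_sqr se0 hmu) => ->; [left | right; rewrite opprK].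
by congr (_, _); rewrite -?v1E -?v2E; ring.
Qed.

End PlaneAlgebra.

Lemma closed_field_root (K : closedFieldType) (n : nat) (c : K) :
  (0 < n)%N -> exists x, x ^+ n = c.
Proof.
move=> n0; have /closed_rootP[x] : size ('X^n - c%:P : {poly K}) != 1%N.
  by rewrite size_XnsubC // eqSS -lt0n.
by rewrite rootE !hornerE subr_eq0 => /eqP; exists x.
Qed.
Arguments closed_field_root {K} n c.

Lemma mul_eq1_inv (K : fieldType) (w N : K) : w * N = 1 -> N != 0 /\ w = N^-1.
Proof.
move=> wN; split; last by rewrite (mulr1_eq (etrans (mulrC N w) wN)).
by apply: contra_eq_neq wN => ->; rewrite mulr0 eq_sym oner_neq0.
Qed.

Lemma card_le_seq (T : eqType) (P : T -> Prop) (l : seq T) :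
  (forall z, P z -> z \in l) -> card_le P (size l).
Proof. by move=> Pl s s_uniq sP; apply: uniq_leq_size => // z /sP /Pl. Qed.

Section Fibers.
Variables (K : closedFieldType) (f : {mpoly K[2]}) (A : K * K) (d : K).
Hypothesis dnz : d != 0.

Lemma Bset_inj z z' : Bset f A d z -> Bset f A d z' ->
  pi1 z = pi1 z' -> pi2 z = pi2 z' -> z = z'.
Proof.
case: z z' => [[x y] w] [[x' y'] w'].
move=> [_ _ _ /mul_eq1_inv[_ ->]] [_ _ _ /mul_eq1_inv[_ ->]].
by rewrite /pi1 /pi2 /= => -> ->.
Qed.

Lemma Bset_center y w : Bset f A d (A, y, w) ->
  (y.1 - A.1) ^+ 2 + (y.2 - A.2) ^+ 2 = d ^+ 2.
Proof. by case=> _ <- _ _; ring. Qed.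

Lemma card_fiber_pi1 (x : K * K) : x != A ->
  card_le (fun z => Bset f A d z /\ pi1 z = x) 2.
Proof.
move=> xA.
have [se hse] := closed_field_root 2 ((x.1 - A.1) ^+ 2 + (x.2 - A.2) ^+ 2) isT.
pose Y mu := (A.1 + mu * (x.1 - A.1), A.2 + mu * (x.2 - A.2)).
pose W (y : K * K) := ((y.1 - A.1) ^+ 2 + (y.2 - A.2) ^+ 2)^-1.
pose z mu := (x, Y mu, W (Y mu)).
apply: (@card_le_seq _ _ [:: z (1 - d / se); z (1 + d / se)]).
move=> [[x' y] w] [[_ hu cross0 /mul_eq1_inv[N0 ->]]].
rewrite /pi1 /= => ex; subst x'.
have [mu hmu ->] := on_line_through_center dnz xA hse N0 hu cross0.
by rewrite !inE; case: hmu => ->; rewrite eqxx ?orbT.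
Qed.

Hypothesis two_neq0 : (2 : K) != 0.

Lemma card_fiber_pi2 (y : K * K) : curve f y ->
  (y.1 - A.1) ^+ 2 + (y.2 - A.2) ^+ 2 != 0 ->
  card_eq (fun z => Bset f A d z /\ pi2 z = y) 2.
Proof.
set N := _ + _ => fy N0.
have [s hs] := closed_field_root 2 N isT.
have s0 : s != 0 by apply: contraNneq N0 => s0; rewrite -hs s0 expr0n.
pose X t := (y.1 + t * (y.1 - A.1), y.2 + t * (y.2 - A.2)).
exists [:: (X (d / s), y, N^-1); (X (- (d / s)), y, N^-1)]; split => //.
  have t0 : 2 * (d / s) != 0 by rewrite !mulf_neq0 // invr_eq0.
  have opp_eq (c v : K) : c + d / s * v = c + - (d / s) * v -> v = 0.
    move=> /addrI e; apply/eqP; rewrite -[v == 0]orFb -(negbTE t0) -mulf_eq0.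
    by apply/eqP; transitivity (d / s * v - - (d / s) * v); [ring | rewrite e subrr].
  rewrite /= inE andbT; apply: contra N0 => /eqP[/opp_eq e1 /opp_eq e2].
  by rewrite /N e1 e2 expr0n addr0.
move=> [[x y'] w]; split.
- move=> [[_ hu cross0 /mul_eq1_inv[_ ->]] ey]; rewrite /pi2 /= in ey; subst y'.
  have [t ht [e1 e2]] := parallel_of_sqnorm hs s0 hu cross0.
  rewrite !inE -/N; apply/orP; case: ht => ht; [left | right]; subst t;
    case: x e1 e2 {hu cross0} => x1 x2 /= e1 e2;
    by rewrite /X -e1 -e2; apply/eqP; congr (_, _, _); congr (_, _); ring.
- have on_fiber t : t ^+ 2 = (d / s) ^+ 2 -> Bset f A d (X t, y, N^-1).
    move=> ht; split; rewrite /X /= //; [| ring | exact: mulVf].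
    transitivity (t ^+ 2 * N); first by rewrite /N; ring.
    by rewrite ht -hs; field.
  by rewrite !inE => /orP[] /eqP[-> -> ->]; split=> //; apply: on_fiber; rewrite ?sqrrN.
Qed.

End Fibers.

Section CharZero.
Variable K : fieldType.
Hypothesis charK0 : [pchar K] =i pred0.

Lemma pchar0_two_neq0 : (2 : K) != 0.
Proof. by move/pcharf0P: charK0 => ->. Qed.

Lemma natr_inj_pchar0 : injective (fun n : nat => n%:R : K).
Proof.
suff le_eq m n : (m <= n)%N -> m%:R = n%:R :> K -> m = n.
  move=> m n /= e; case: (leqP m n) => [le|/ltnW le]; first exact: le_eq.
  exact/esym/le_eq.
move=> le_mn e; apply/eqP; rewrite eqn_leq le_mn /= -subn_eq0.
by move/pcharf0P: charK0 => <-; rewrite natrB // e subrr.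
Qed.

Lemma poly_eq0_of_roots_off (rs : seq K) (q : {poly K}) :
  (forall t, t \notin rs -> root q t) -> q = 0.
Proof.
move=> qroot; pose r := q * \prod_(c <- rs) ('X - c%:P).
have /eqP : r = 0.
  apply: (@roots_geq_poly_eq0 _ _ [seq k%:R | k <- iota 0 (size r)]).
  - apply/allP=> t _; rewrite rootM root_prod_XsubC orbC.
    by case: (boolP (t \in rs)) => //= /qroot.
  - by rewrite (map_inj_uniq natr_inj_pchar0) iota_uniq.
  - by rewrite size_map size_iota.
by rewrite mulf_eq0 (negbTE (monic_neq0 (monic_prod_XsubC _ _ _))) orbF => /eqP.
Qed.

End CharZero.

Section CircleDivisor.
Variables (K : closedFieldType) (a b d : K).

Definition circle_poly : {mpoly K[2]} :=
  ('X_0 - a%:MP) ^+ 2 + ('X_1 - b%:MP) ^+ 2 - (d ^+ 2)%:MP.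

Lemma meval_circle_poly (v : 'I_2 -> K) :
  circle_poly.@[v] = (v 0 - a) ^+ 2 + (v 1 - b) ^+ 2 - d ^+ 2.
Proof.
by rewrite /circle_poly !(mevalB, mevalD, mevalM, rmorphXn, mevalC, mevalXU).
Qed.

Local Notation inX0 := (horner_alg ('X_0 : {mpoly K[2]})).

Lemma meval_inX0 (v : 'I_2 -> K) (q : {poly K}) : (inX0 q).@[v] = q.[v 0].
Proof.
elim/poly_ind: q => [|q c IHq]; first by rewrite rmorph0 meval0 horner0.
rewrite rmorphD rmorphM /= horner_algX horner_algC alg_mpolyC.
by rewrite mevalD mevalM IHq mevalXU mevalC hornerMXaddC.
Qed.

(* Division by [circle_poly], which is monic of degree 2 in y2. *)
Lemma circle_decomp (p : {mpoly K[2]}) :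
  exists h r0 r1, p = circle_poly * h + inX0 r0 + inX0 r1 * 'X_1.
Proof.
pose R q := exists h r0 r1, q = circle_poly * h + inX0 r0 + inX0 r1 * 'X_1.
have RD q q' : R q -> R q' -> R (q + q').
  move=> [h [r0 [r1 ->]]] [h' [r0' [r1' ->]]].
  by exists (h + h'), (r0 + r0'), (r1 + r1'); rewrite !rmorphD; ring.
have RM c q : R q -> R (inX0 c * q).
  move=> [h [r0 [r1 ->]]].
  by exists (inX0 c * h), (c * r0), (c * r1); rewrite !rmorphM; ring.
have RX1 k : R ('X_1 ^+ k).
  elim: k => [|k [h [r0 [r1 E]]]].
    by exists 0, 1, 0; rewrite !rmorph0 rmorph1; ring.
  exists ('X_1 * h + inX0 r1), (r1 * ((d ^+ 2 - b ^+ 2)%:P - ('X - a%:P) ^+ 2)),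
    (r0 + r1 * (2 * b)%:P).
  rewrite exprS E /circle_poly.
  rewrite !(rmorphD, rmorphN, rmorphM, rmorphXn, rmorph_nat) /=.
  by rewrite horner_algX !horner_algC !alg_mpolyC; ring.
rewrite (mpolyE p); apply: (big_ind R) => [|//|m _].
  by exists 0, 0, 0; rewrite !rmorph0; ring.
rewrite mpolyXE_id !big_ord_recr big_ord0 /= mul1r.
rewrite (_ : widen_ord _ _ = ord0); last exact: val_inj.
have -> : p@_m *: ('X_ord0 ^+ m ord0 * 'X_ord_max ^+ m ord_max) =
          inX0 ((p@_m)%:P * 'X^(m ord0)) * 'X_ord_max ^+ m ord_max.
  by rewrite rmorphM rmorphXn /= horner_algC horner_algX alg_mpolyC -mulrA mul_mpolyC.
by apply: RM; apply: RX1.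
Qed.

Hypothesis d0 : d != 0.

Lemma circle_poly_nonconst : msize circle_poly != 1%N.
Proof.
apply: contra d0 => /eqP/eq_leq/msize1_polyC cE.
have := meval_circle_poly (pt2 (a, b)); have := meval_circle_poly (pt2 (a + d, b)).
rewrite cE !mevalC /pt2 /= => eP eO.
suff : d ^+ 2 = 0 by move/eqP; rewrite expf_eq0.
transitivity (((a + d - a) ^+ 2 + (b - b) ^+ 2 - d ^+ 2) -
              ((a - a) ^+ 2 + (b - b) ^+ 2 - d ^+ 2)); first ring.
by rewrite -eP -eO subrr.
Qed.

Lemma irreducible_circle_multiple f h :
  irreducible_mpoly f -> f = circle_poly * h ->
  forall y, curve f y <-> (y.1 - a) ^+ 2 + (y.2 - b) ^+ 2 = d ^+ 2.
Proof.
move=> [_ firr] fE; case: (firr _ _ fE) => [/eqP|/eqP/msize_poly1P[c c0 hE] y].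
  by rewrite (negbTE circle_poly_nonconst).
rewrite /curve /ev2 fE hE mevalM mevalC meval_circle_poly /pt2 /=.
split=> [/eqP|->]; last by rewrite subrr mul0r.
by rewrite mulf_eq0 (negbTE c0) orbF subr_eq0 => /eqP.
Qed.

Hypothesis charK0 : [pchar K] =i pred0.

Lemma circle_dvd (f : {mpoly K[2]}) :
  (forall y, (y.1 - a) ^+ 2 + (y.2 - b) ^+ 2 = d ^+ 2 -> ev2 f y = 0) ->
  exists h, f = circle_poly * h.
Proof.
move=> f_circle; have [h [r0 [r1 E]]] := circle_decomp f.
have ev2E t y2 : (t - a) ^+ 2 + (y2 - b) ^+ 2 = d ^+ 2 ->
    ev2 f (t, y2) = r0.[t] + r1.[t] * y2.
  move=> on_circle; rewrite /ev2 E !mevalD !mevalM meval_circle_poly !meval_inX0.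
  by rewrite (mevalXU _ 1) /pt2 /= on_circle subrr mul0r add0r.
have r_root t : t \notin [:: a + d; a - d] -> root r0 t && root r1 t.
  rewrite !inE negb_or => /andP[tP tM].
  have [s hs] := closed_field_root 2 (d ^+ 2 - (t - a) ^+ 2) isT.
  have s0 : s != 0.
    apply/eqP => s0; move/eqP: hs; rewrite s0 expr0n eq_sym subr_eq0 eqf_sqr.
    by case/orP=> /eqP da; [move/eqP: tP | move/eqP: tM]; apply; rewrite da; ring.
  (* The line y1 = t meets the circle in the two points (t, b +- s). *)
  have on_circle e : e ^+ 2 = s ^+ 2 -> (t - a) ^+ 2 + (b + e - b) ^+ 2 = d ^+ 2.
    by move=> he; rewrite addrAC subrr add0r he hs addrC subrK.
  have eP := f_circle (t, b + s) (on_circle s erefl).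
  have eM := f_circle (t, b + - s) (on_circle (- s) (sqrrN s)).
  rewrite (ev2E _ _ (on_circle s erefl)) in eP.
  rewrite (ev2E _ _ (on_circle (- s) (sqrrN s))) in eM.
  have r1t : r1.[t] * (2 * s) =
             (r0.[t] + r1.[t] * (b + s)) - (r0.[t] + r1.[t] * (b + - s)) by ring.
  rewrite eP eM subrr in r1t.
  move/eqP: r1t; rewrite !mulf_eq0 (negbTE s0) (negbTE (pchar0_two_neq0 charK0)).
  rewrite !orbF => /eqP r1t.
  by rewrite /root r1t; move: eP; rewrite r1t mul0r addr0 => ->; rewrite eqxx.
rewrite E.
have -> : r0 = 0 by apply: (poly_eq0_of_roots_off charK0) => t /r_root/andP[].
have -> : r1 = 0 by apply: (poly_eq0_of_roots_off charK0) => t /r_root/andP[].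
by exists h; rewrite !rmorph0 mul0r !addr0.
Qed.

End CircleDivisor.

Lemma size_prod_exp_leq (R : idomainType) (I : finType) (F : I -> {poly R})
    (m : I -> nat) (k : nat) :
  (forall j, size (F j) <= k.+1)%N ->
  (size (\prod_j F j ^+ m j)%R <= (k * \sum_j m j).+1)%N.
Proof.
move=> sizeF; rewrite big_distrr /=.
apply: (@big_ind2 _ _ (fun (p : {poly R}) (e : nat) => size p <= e.+1)%N)
  => [|p e q e' sp sq|j _].
- by rewrite size_poly1.
- by have := size_polyMleq p q; lia.
- have := size_poly_exp_leq (F j) (m j).
  by have := leq_mul (sizeF j) (leqnn (m j)); lia.
Qed.

Section CircleParametrization.
Variables (K : fieldType) (a b d i : K).

(* With u = (y1 - a) + i (y2 - b) and v = (y1 - a) - i (y2 - b), one has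
   u v = d^2 on the circle, hence y1 = ((u^2 + d^2)/2 + a u)/u and
   y2 = (i (d^2 - u^2)/2 + b u)/u; circle_num j is the numerator of y_(j+1). *)
Definition circle_num (j : 'I_2) : {poly K} :=
  if val j == 0%N then ('X^2 + (d ^+ 2)%:P) * (2^-1)%:P + a%:P * 'X
  else ((d ^+ 2)%:P - 'X^2) * (i / 2)%:P + b%:P * 'X.

(* u^(deg f) f(circle_point u), each monomial of f cleared of its own
   denominator u^(mdeg m). *)
Definition circle_pullback (f : {mpoly K[2]}) : {poly K} :=
  \sum_(m <- msupp f)
    (f@_m)%:P * (\prod_(j < 2) circle_num j ^+ m j * 'X^(tdeg f - mdeg m)).

Lemma size_circle_num j : (size (circle_num j) <= 3)%N.
Proof.
have sizeXa (c : K) : (size (c%:P * 'X)%R <= 3)%N.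
  by rewrite mul_polyC (leq_trans (size_scale_leq _ _)) // size_polyX.
have sizeX2 (p : {poly K}) (c : K) : (size p <= 3)%N -> (size (p * c%:P)%R <= 3)%N.
  by move=> sp; rewrite mulrC mul_polyC (leq_trans (size_scale_leq _ _)).
rewrite /circle_num; case: ifP => _; apply: leq_trans (size_polyD _ _) _;
  rewrite geq_max sizeXa andbT sizeX2 //.
- by rewrite size_XnaddC.
- rewrite addrC (leq_trans (size_polyD _ _)) // size_polyN size_polyXn geq_max.
  exact: leq_trans (size_polyC_leq1 _) _.
Qed.

Lemma size_circle_pullback f : (size (circle_pullback f) <= (2 * tdeg f).+1)%N.
Proof.
apply: leq_trans (size_sum _ _ _) _.
apply/bigmax_leqP_seq => m /msize_mdeg_lt lt_m _.
set P := \prod_(j < 2) _.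
have sizeP : (size P <= (2 * mdeg m).+1)%N.
  by rewrite mdegE; apply: size_prod_exp_leq size_circle_num.
have := size_polyMleq P 'X^(tdeg f - mdeg m).
have := size_polyMleq (f@_m)%:P (P * 'X^(tdeg f - mdeg m)).
rewrite size_polyXn; have := size_polyC_leq1 f@_m; move: sizeP lt_m; rewrite /tdeg.
set q := size (_ * (P * _)); set r := size (P * _); lia.
Qed.

Definition circle_point (u : K) : K * K :=
  ((circle_num 0).[u] / u, (circle_num 1).[u] / u).

Definition circle_coord (y : K * K) : K := (y.1 - a) + i * (y.2 - b).

Lemma circle_pullbackE f u : u != 0 ->
  (circle_pullback f).[u] = u ^+ tdeg f * ev2 f (circle_point u).
Proof.
move=> u0; rewrite /ev2 mevalE mulr_sumr horner_sum; apply: eq_big_seq => m.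
move=> /msize_mdeg_lt lt_m; have le_m : (mdeg m <= tdeg f)%N by rewrite /tdeg; lia.
rewrite hornerM hornerC hornerM horner_prod hornerXn.
rewrite -{2}(subnK le_m) exprD mdegE -prodrXr [RHS]mulrC -!mulrA; congr (_ * _).
rewrite [RHS]mulrCA mulrC; congr (_ * _).
rewrite mulrC -big_split; apply: eq_bigr => j _ /=; rewrite horner_exp -exprMn.
congr (_ ^+ _); rewrite /pt2 /circle_point /circle_num.
by case: ifP => _ /=; rewrite [RHS]mulrC divfK.
Qed.

Hypotheses (i2 : i ^+ 2 = -1) (d0 : d != 0) (two_neq0 : (2 : K) != 0).

Lemma circle_coordK y : (y.1 - a) ^+ 2 + (y.2 - b) ^+ 2 = d ^+ 2 ->
  circle_coord y != 0 /\ circle_point (circle_coord y) = y.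
Proof.
case: y => y1 y2 /= on_circle; rewrite /circle_point.
set u := circle_coord (y1, y2); set v := (y1 - a) - i * (y2 - b).
have uv : u * v = d ^+ 2.
  rewrite -on_circle; transitivity ((y1 - a) ^+ 2 - i ^+ 2 * (y2 - b) ^+ 2).
    by rewrite /u /v /circle_coord /=; ring.
  by rewrite i2; ring.
have u0 : u != 0 by apply: contra_eq_neq uv => ->; rewrite mul0r eq_sym expf_neq0.
split => //; congr (_, _); apply: (mulIf u0); rewrite divfK //.
- by rewrite /circle_num /= !hornerE -uv /u /v /circle_coord /=; field.
- transitivity (y2 * u - (i ^+ 2 + 1) * (y2 - b) * u).
    by rewrite /circle_num /= !hornerE -uv /u /v /circle_coord /=; field.
  by rewrite i2 addNr !mul0r subr0.
Qed.

End CircleParametrization.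

Lemma card_fiber_pi1_center (K : closedFieldType) (charK0 : [pchar K] =i pred0)
    (f : {mpoly K[2]}) (a b d : K) : irreducible_mpoly f -> d != 0 ->
  ~ (forall y, curve f y <-> (y.1 - a) ^+ 2 + (y.2 - b) ^+ 2 = d ^+ 2) ->
  card_le (fun z => Bset f (a, b) d z /\ pi1 z = (a, b)) (2 * tdeg f).
Proof.
move=> firr d0 not_circle.
have [i i2] := closed_field_root 2 (-1 : K) isT.
have two0 := pchar0_two_neq0 charK0.
have [G0|G0] := eqVneq (circle_pullback a b d i f) 0.
  case: not_circle.
  suff [h fE] : exists h, f = circle_poly a b d * h.
    exact: irreducible_circle_multiple firr fE.
  apply: (circle_dvd charK0) => y /(circle_coordK i2 d0 two0)[u0 uy].
  have := circle_pullbackE a b d i f u0; rewrite G0 horner0 uy => /esym/eqP.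
  by rewrite mulf_eq0 expf_eq0 (negbTE u0) andbF => /eqP.
move=> s s_uniq sP; pose u z := circle_coord a b i (pi2 z).
have z_circle z : z \in s -> ((pi2 z).1 - a) ^+ 2 + ((pi2 z).2 - b) ^+ 2 = d ^+ 2.
  move=> /sP[]; case: z => [[x y] w] Bz; rewrite /pi1 /= => ex; subst x.
  exact: Bset_center Bz.
have z_coordK z (zs : z \in s) := circle_coordK i2 d0 two0 (z_circle z zs).
suff : (size (map u s) < size (circle_pullback a b d i f))%N.
  by rewrite size_map => /leq_trans/(_ (size_circle_pullback a b d i f)); rewrite ltnS.
apply: max_poly_roots G0 _ _.
- apply/allP => _ /mapP[z zs ->]; have [u0 uz] := z_coordK z zs.
  rewrite /root circle_pullbackE // uz.
  by case: z {zs u0 uz} (sP z zs) => [[x y] w] [[fy _ _ _] _]; rewrite fy mulr0.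
- rewrite map_inj_in_uniq // => z z' zs z's uzz'.
  have [[Bz pz] [Bz' pz']] := (sP z zs, sP z' z's).
  apply: Bset_inj Bz Bz' _ _; first by rewrite pz pz'.
  have [_ <-] := z_coordK z zs; have [_ <-] := z_coordK z' z's.
  exact: congr1 _ uzz'.
Qed.

Theorem lemma2 (K : closedFieldType) (charK0 : [pchar K] =i pred0)
  (f : {mpoly K[2]}) (firr : irreducible_mpoly f)
  (A : K * K) (d : K) (dnz : d != 0) :
  ((~ (forall y : K * K,
          curve f y <-> (y.1 - A.1) ^+ 2 + (y.2 - A.2) ^+ 2 = d ^+ 2)) ->
     (forall x : K * K,
        (exists z, Bset f A d z /\ pi1 z = x) -> x != A ->
        card_le (fun z => Bset f A d z /\ pi1 z = x) 2)
  /\ ((exists z, Bset f A d z /\ pi1 z = A) ->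
        card_le (fun z => Bset f A d z /\ pi1 z = A) (2 * tdeg f)))
  /\
  (forall y : K * K, curve f y ->
     (y.1 - A.1) ^+ 2 + (y.2 - A.2) ^+ 2 != 0 ->
     card_eq (fun z => Bset f A d z /\ pi2 z = y) 2).
Proof.
have two0 := pchar0_two_neq0 charK0.
split=> [not_circle|y]; last exact: card_fiber_pi2.
split=> [x _|_]; first exact: card_fiber_pi1.
by case: A not_circle => a b; apply: card_fiber_pi1_center.
Qed.
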